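(* Let $G$ be a group with finite generating set $S$ (with $S=S^{-1}$, $e\notin S$). For $n\ge 3$ let $\sigma=(1\,2\,\cdots\,n)\in\mathrm{Sym}(n)$ and $S_{\rm pos}=\mathrm{Sym}(n)\smallsetminus\{e,\sigma,\sigma^{-1}\}$. Then for all sufficiently large $n$ there is a map $i\colon G\to G\times\mathrm{Sym}(n)$ which is an isometric embedding for the word metrics of $(G,S)$ and $(G\times\mathrm{Sym}(n),S\boxtimes S_{\rm pos})$, such that $\kappa(i(g))>0$ for all $g\in G$ (curvature with respect to $S\boxtimes S_{\rm pos}$), and such that $d(i(gh),i(g)i(h))\le 2$ for all $g,h\in G$.
   Context: For generating sets $S_1,S_2$ of groups $G_1,G_2$, $S_1\boxtimes S_2=(S_1\times\{e\})\cup(\{e\}\times S_2)$ is the split generating set of $G_1\times G_2$. For a group with finite generating set $S$ ($S=S^{-1}$, $e\notin S$), $|x|$ is word length, $d(x,y)=|x^{-1}y|$, $\mathrm{Av}(g)=\frac{1}{|S|}\sum_{a\in S}|a^{-1}ga|$, and for $g\neq e$ the curvature is $\kappa(g)=\frac{|g|-\mathrm{Av}(g)}{|g|}$. *)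

From HB Require Import structures.
From mathcomp Require Import all_boot all_order all_algebra all_fingroup.
From Stdlib Require Import ClassicalDescription List.
Set Implicit Arguments. Unset Strict Implicit. Unset Printing Implicit Defensive.
Import Order.TTheory GRing.Theory Num.Theory.

Record is_group (T : Type) (mul : T -> T -> T) (inv : T -> T) (one : T) : Prop :=
  { grp_assoc : forall x y z, mul x (mul y z) = mul (mul x y) z;
    grp_mul1 : forall x, mul one x = x;
    grp_mulV : forall x, mul (inv x) x = one }.

Section Words.
Variables (T : Type) (mul : T -> T -> T) (inv : T -> T) (one : T) (S : list T).

Definition has_word (x : T) (n : nat) : Prop :=
  exists w : list T, length w = n /\ Forall (fun a => In a S) w /\
                     fold_right mul one w = x.

Definition gen_set : Prop :=
  NoDup S /\ (forall a, In a S -> In (inv a) S) /\ ~ In one S /\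
  (forall x, exists n, has_word x n).

Definition has_wordb (x : T) (n : nat) : bool :=
  if excluded_middle_informative (has_word x n) then true else false.

Definition wlen (x : T) : nat :=
  match excluded_middle_informative (exists n, has_wordb x n) with
  | left H => ex_minn H
  | right _ => 0%N
  end.

Definition wdist (x y : T) : nat := wlen (mul (inv x) y).

Definition Av (g : T) : rat :=
  ((\sum_(a <- S) (wlen (mul (mul (inv a) g) a))%:R) / (size S)%:R)%R.

Definition kappa (g : T) : rat :=
  (((wlen g)%:R - Av g) / (wlen g)%:R)%R.

End Words.

Definition pmul (A B : Type) (mA : A -> A -> A) (mB : B -> B -> B)
  (x y : A * B) : A * B := (mA x.1 y.1, mB x.2 y.2).
Definition pinv (A B : Type) (iA : A -> A) (iB : B -> B) (x : A * B) : A * B :=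
  (iA x.1, iB x.2).

Definition split_gen (A B : Type) (eA : A) (eB : B) (S1 : list A) (S2 : list B)
  : list (A * B) := map (fun a => (a, eB)) S1 ++ map (fun b => (eA, b)) S2.

(* sigma = (1 2 ... n), i.e. i |-> i+1 mod n on 'I_n *)
Definition sigma_cyc (n : nat) : 'S_n := perm (@ordS_inj n).

Definition S_pos (n : nat) : list 'S_n :=
  enum [set p : 'S_n | [&& p != 1%g, p != sigma_cyc n & p != (sigma_cyc n)^-1%g]].

Definition Gsym (G : Type) (n : nat) := (G * 'S_n)%type.

From HB Require Import structures.
From mathcomp Require Import all_boot all_order all_algebra all_fingroup.
From Stdlib Require Import List ClassicalDescription.
From mathcomp Require Import zify.
Import Order.TTheory GRing.Theory Num.Theory.

Set Implicit Arguments. Unset Strict Implicit. Unset Printing Implicit Defensive.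

(* The embedding is g |-> (g, sigma). For the split generating set word length
   is additive, |(x, q)| = |x|_S + |q|_{S_pos}, and |sigma|_{S_pos} = 2 since
   sigma is neither e nor in S_pos, while sigma = sigma^3 sigma^(n-2). Hence
   i(g)^-1 i(h) = (g^-1 h, e) makes i an isometry, |i(g)| = |g| + 2, and
   i(gh)^-1 i(g) i(h) = (e, sigma) has length 2. Conjugating i(g) by (s, e)
   raises the length by at most 2, but conjugating by (e, p), p in S_pos, gives
   (g, sigma^p) of length |g| + 1 unless sigma^p is sigma or sigma^-1. A
   permutation conjugating sigma to a given q is determined by the image of one
   point, so at most 2n of the n! - 3 elements of S_pos are exceptional, and
   Av(i(g)) < |i(g)| as soon as n! - 3 > 2|S| + 2n. *)

Lemma InP (T : eqType) (x : T) (s : list T) : reflect (In x s) (x \in s).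
Proof.
elim: s => [|a s IH] /=; first by constructor.
rewrite seq.in_cons; apply: (iffP orP) => [[/eqP->|/IH]|[->|/IH]]; by [left|right].
Qed.

Lemma List_mapE (A B : Type) (f : A -> B) (s : list A) : List.map f s = seq.map f s.
Proof. by elim: s => //= a s ->. Qed.

Section WordLength.
Variables (T : Type) (mul : T -> T -> T) (one : T) (S : list T).
Local Notation word := (has_word mul one S).
Local Notation len := (wlen mul one S).

Lemma has_wordbP x k : reflect (word x k) (has_wordb mul one S x k).
Proof. by rewrite /has_wordb; case: excluded_middle_informative; constructor. Qed.

Lemma wlen_min x k : word x k -> len x <= k.
Proof.
move=> wk; rewrite /wlen; case: excluded_middle_informative => [ex|[]].
  by case: ex_minnP => m _; apply; apply/has_wordbP.
by exists k; apply/has_wordbP.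
Qed.

Lemma has_word_wlen x k : word x k -> word x (len x).
Proof.
move=> wk; rewrite /wlen; case: excluded_middle_informative => [ex|[]].
  by case: ex_minnP => m /has_wordbP.
by exists k; apply/has_wordbP.
Qed.

Lemma wlen_one : len one = 0.
Proof. by apply/eqP; rewrite -leqn0; apply: wlen_min; exists [::]. Qed.

Section Monoid.
Hypotheses (mulA : associative mul) (mul1x : left_id one mul) (mulx1 : right_id one mul).

Lemma fold_right_mul w y : fold_right mul y w = mul (fold_right mul one w) y.
Proof. by elim: w => [|a w IH] /=; rewrite ?mul1x // IH mulA. Qed.

Lemma has_word_letter a : In a S -> word a 1.
Proof. by exists [:: a]; rewrite /= mulx1; split; last split; first by []; constructor. Qed.

Lemma has_word_mul x y j k : word x j -> word y k -> word (mul x y) (j + k).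
Proof.
move=> [u [<- [Su <-]]] [v [<- [Sv <-]]]; exists (u ++ v); split; last split.
- exact: length_app.
- exact/Forall_app.
- by rewrite fold_right_app fold_right_mul.
Qed.

Hypothesis S_gen : forall x, exists k, word x k.

Lemma has_word_wlen_gen x : word x (len x).
Proof. by have [k /has_word_wlen] := S_gen x. Qed.

Lemma wlen_mul_le x y : len (mul x y) <= len x + len y.
Proof. by apply/wlen_min/has_word_mul; apply: has_word_wlen_gen. Qed.

Lemma wlen_letter_le a : In a S -> len a <= 1.
Proof. by move/has_word_letter/wlen_min. Qed.

End Monoid.
End WordLength.

Section Group.
Variables (T : Type) (mul : T -> T -> T) (inv : T -> T) (one : T).
Hypothesis grpT : is_group mul inv one.

Lemma is_group_mulx1 : right_id one mul.
Proof.
case: grpT => mulA mul1x mulVx x.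
have xE : x = mul (inv (inv x)) one by rewrite -(mulVx x) mulA mulVx mul1x.
by rewrite {1}xE -mulA mul1x -xE.
Qed.

Lemma is_group_inv1 : inv one = one.
Proof. by rewrite -[LHS]is_group_mulx1 (grp_mulV grpT). Qed.

End Group.

Section SplitGenerators.
Variables (G1 G2 : Type) (mul1 : G1 -> G1 -> G1) (e1 : G1) (S1 : list G1)
  (mul2 : G2 -> G2 -> G2) (e2 : G2) (S2 : list G2).
Hypotheses (mul1_id : left_id e1 mul1) (mul2_id : left_id e2 mul2).
Local Notation mulP := (pmul mul1 mul2).
Local Notation eP := (e1, e2).
Local Notation SP := (split_gen e1 e2 S1 S2).
Local Notation word1 := (has_word mul1 e1 S1).
Local Notation word2 := (has_word mul2 e2 S2).
Local Notation wordP := (has_word mulP eP SP).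

Lemma size_split_gen : size SP = size S1 + size S2.
Proof. by rewrite /split_gen size_cat !List_mapE !size_map. Qed.

Lemma big_split_gen (F : G1 * G2 -> nat) :
  \sum_(a <- SP) F a = \sum_(x <- S1) F (x, e2) + \sum_(y <- S2) F (e1, y).
Proof. by rewrite /split_gen big_cat !List_mapE !big_map. Qed.

Lemma has_word_pair x y j k : word1 x j -> word2 y k -> wordP (x, y) (j + k).
Proof.
move=> [u [<- [Su <-]]] [v [<- [Sv <-]]].
exists (List.map (pair^~ e2) u ++ List.map (pair e1) v); split; last split.
- by rewrite length_app !length_map.
- apply/Forall_app; split; apply/Forall_map.
  + by apply: Forall_impl Su => a Sa; apply: in_or_app; left; apply: in_map.
  + by apply: Forall_impl Sv => b Sb; apply: in_or_app; right; apply: in_map.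
rewrite fold_right_app.
have -> : fold_right mulP eP (List.map (pair e1) v) = (e1, fold_right mul2 e2 v).
  by elim: v {Sv} => //= b v ->; rewrite /pmul /= mul1_id.
by elim: u {Su} => //= a u ->; rewrite /pmul /= mul2_id.
Qed.

Lemma has_word_unpair x y k : wordP (x, y) k ->
  exists j1 j2, [/\ word1 x j1, word2 y j2 & j1 + j2 = k].
Proof.
case=> w [<- [Sw]]; elim: w Sw x y => [|[a b] w IH] Sw x y /=.
  by case=> <- <-; exists 0, 0; split => //; exists [::].
case/Forall_cons_iff: Sw => Sab Sw.
have {}IH := IH Sw.
case: (fold_right mulP eP w) IH => x' y' /(_ x' y' erefl) [j1 [j2 [wx wy <-]]].
rewrite /pmul /= => -[<- <-].
case: (in_app_or _ _ _ Sab) => /in_map_iff [c [[<- <-] Sc]].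
- exists j1.+1, j2; split; last by lia.
  + by case: wx => u [<- [Su <-]]; exists (c :: u); do !split => //; constructor.
  + by rewrite mul2_id.
- exists j1, j2.+1; split; last by lia.
  + by rewrite mul1_id.
  + by case: wy => v [<- [Sv <-]]; exists (c :: v); do !split => //; constructor.
Qed.

Lemma wlen_split_gen x y : (exists j, word1 x j) -> (exists k, word2 y k) ->
  wlen mulP eP SP (x, y) = wlen mul1 e1 S1 x + wlen mul2 e2 S2 y.
Proof.
move=> [j wx] [k wy].
have wxy := has_word_pair (has_word_wlen wx) (has_word_wlen wy).
apply/eqP; rewrite eqn_leq wlen_min //=.
have [j1 [j2 [wx' wy' <-]]] := has_word_unpair (has_word_wlen wxy).
by rewrite leq_add // wlen_min.
Qed.

End SplitGenerators.

Lemma kappa_gt0 (T : Type) (mul : T -> T -> T) (inv : T -> T) (one : T) (S : list T) g :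
  0 < wlen mul one S g ->
  \sum_(a <- S) wlen mul one S (mul (mul (inv a) g) a) < size S * wlen mul one S g ->
  (0 < kappa mul inv one S g)%R.
Proof.
move=> len_gt0 sum_lt; have size_gt0 : 0 < size S by move: sum_lt; case: (size S).
rewrite /kappa /Av divr_gt0 ?ltr0n // subr_gt0 ltr_pdivrMr ?ltr0n //.
by rewrite -natr_sum -natrM ltr_nat mulnC.
Qed.

Section Cycle.
Variable n : nat.
Hypothesis n_gt0 : 0 < n.
Local Notation sigma := (sigma_cyc n).

Lemma sigma_cyc_expE k x : val ((sigma ^+ k)%g x) = (x + k) %% n.
Proof.
rewrite permX; elim: k => [|k IH] /=; first by rewrite addn0 modn_small.
by rewrite /sigma_cyc permE /= IH -addn1 modnDml addn1 addnS.
Qed.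

Lemma sigma_cyc_exp_order : (sigma ^+ n)%g = 1%g.
Proof. by apply/permP => x; apply: val_inj; rewrite sigma_cyc_expE perm1 modnDr modn_small. Qed.

Lemma sigma_cyc_invE : (sigma^-1)%g = (sigma ^+ n.-1)%g.
Proof. by apply/eqP; rewrite eq_invg_mul -expgS prednK // sigma_cyc_exp_order. Qed.

Lemma sigma_cyc_transitive (x0 x : 'I_n) : exists k, (sigma ^+ k)%g x0 = x.
Proof.
exists (x + (n - x0)); apply: val_inj; rewrite sigma_cyc_expE addnCA.
by rewrite subnKC ?modnDr ?modn_small // ltnW.
Qed.

Lemma sigma_cyc_exp_inj j k : j < n -> k < n -> (sigma ^+ j)%g = (sigma ^+ k)%g -> j = k.
Proof.
move=> jn kn /(congr1 (fun p : 'S_n => val (p (Ordinal n_gt0)))).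
by rewrite !sigma_cyc_expE /= !add0n !modn_small.
Qed.

Lemma cent_sigma_cyc_fix (r : 'S_n) x0 : commute r sigma -> r x0 = x0 -> r = 1%g.
Proof.
move=> rC rx0; apply/permP => x; have [k <-] := sigma_cyc_transitive x0 x.
by rewrite perm1 -permM -(commuteX k rC) permM rx0.
Qed.

Lemma conjg_sigma_cyc_inj (p1 p2 : 'S_n) x0 :
  (sigma ^ p1 = sigma ^ p2)%g -> p1 x0 = p2 x0 -> p1 = p2.
Proof.
move=> conjE px0; apply/eqP; rewrite eq_mulgV1; apply/eqP.
have sigma_fix : (sigma ^ (p1 * p2^-1) = sigma)%g by rewrite conjgM conjE conjgK.
apply: (@cent_sigma_cyc_fix _ x0); last by rewrite permM px0 permK.
by rewrite /commute [RHS]conjgC sigma_fix.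
Qed.

Lemma card_conjg_sigma_cyc (q : 'S_n) : #|[pred p : 'S_n | (sigma ^ p == q)%g]| <= n.
Proof.
rewrite -[n in _ <= n]card_ord; apply: (@leq_card_in _ _ (fun p : 'S_n => p (Ordinal n_gt0))).
by move=> p1 p2 /eqP p1q /eqP p2q; apply: conjg_sigma_cyc_inj; rewrite p1q p2q.
Qed.

End Cycle.

Section PositiveGenerators.
Variable n : nat.
Local Notation sigma := (sigma_cyc n).
Local Notation mulS := (fun p q : 'S_n => (p * q)%g).
Local Notation word := (has_word mulS 1%g (S_pos n)).

Lemma mem_S_pos p : (p \in S_pos n) = [&& p != 1%g, p != sigma & p != sigma^-1]%g.
Proof. by rewrite mem_enum inE. Qed.

Lemma size_S_pos : n`! <= size (S_pos n) + 3.
Proof.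
rewrite /S_pos -cardE; set A := [set p : 'S_n | _].
rewrite -card_Sn -(cardsC A) leq_add2l.
apply: leq_trans (card_size [:: 1; sigma; sigma^-1]%g); apply: subset_leq_card.
by apply/subsetP => p; rewrite !inE !negb_and !negbK orbA.
Qed.

Hypothesis n_ge5 : 5 <= n.

Lemma sigma_cyc_exp_S_pos k : 2 <= k <= n - 2 -> (sigma ^+ k)%g \in S_pos n.
Proof.
have n_gt0 : 0 < n by lia.
move=> /andP[k_ge2 k_le]; rewrite mem_S_pos sigma_cyc_invE //.
have neq j : j < n -> j != k -> (sigma ^+ k != sigma ^+ j)%g.
  by move=> jn jk; apply/eqP => /sigma_cyc_exp_inj; lia.
apply/and3P; split; [have := neq 0 | have := neq 1 | have := neq n.-1];
  rewrite ?expg0 ?expg1; apply; lia.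
Qed.

Lemma has_word_sigma_cyc_expD j k : 2 <= j <= n - 2 -> 2 <= k <= n - 2 ->
  word (sigma ^+ (j + k))%g 2.
Proof.
move=> /sigma_cyc_exp_S_pos /InP Sj /sigma_cyc_exp_S_pos /InP Sk.
exists [:: sigma ^+ j; sigma ^+ k]%g; do !split; first by repeat constructor.
by rewrite /= mulg1 expgD.
Qed.

Lemma has_word_sigma_cyc : word sigma 2.
Proof.
have -> : sigma = (sigma ^+ (3 + (n - 2)))%g.
  by rewrite (_ : 3 + (n - 2) = n + 1) ?expgD ?sigma_cyc_exp_order ?mul1g //; lia.
by apply: has_word_sigma_cyc_expD; lia.
Qed.

Lemma has_word_sigma_cycV : word (sigma^-1)%g 2.
Proof.
rewrite sigma_cyc_invE; last by lia.
by rewrite (_ : n.-1 = 2 + (n - 3)); [apply: has_word_sigma_cyc_expD | ]; lia.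
Qed.

Lemma wlen_sigma_cyc : wlen mulS 1%g (S_pos n) sigma = 2.
Proof.
apply/eqP; rewrite eqn_leq (wlen_min has_word_sigma_cyc) /=.
have [w [wlen_w [Sw wE]]] := has_word_wlen has_word_sigma_cyc.
rewrite -wlen_w; case: w wlen_w Sw wE => [|a [|b w]] //= _.
  move=> _ sigma1; suff: 1 = 0 by [].
  by apply: (sigma_cyc_exp_inj (n := n)); rewrite ?expg1 ?expg0 //; lia.
by case/Forall_cons_iff => /InP; rewrite mulg1 mem_S_pos => /and3P[_ /eqP + _] _.
Qed.

Lemma sum_S_pos_conjg_eq_le (q : 'S_n) : \sum_(p <- S_pos n) (sigma ^ p == q)%g <= n.
Proof.
have n_gt0 : 0 < n by lia.
apply: leq_trans (card_conjg_sigma_cyc n_gt0 q).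
rewrite big_enum /= -sum1_card big_mkcond [X in _ <= X]big_mkcond /=.
by apply: leq_sum => p _; rewrite !inE; case: ifP; case: (_ == q).
Qed.

Lemma has_word_S_pos_le q :
  exists2 k, k <= 1 + ((q == sigma) + (q == sigma^-1)%g) & word q k.
Proof.
case Sq: (q \in S_pos n).
  by exists 1; [lia | apply: has_word_letter; [exact: mulg1 | exact/InP]].
move: Sq; rewrite mem_S_pos => /negbT; rewrite !negb_and !negbK => /or3P[] /eqP->.
- by exists 0; [lia | exists [::]].
- by exists 2; [rewrite eqxx; lia | exact: has_word_sigma_cyc].
- by exists 2; [rewrite eqxx; lia | exact: has_word_sigma_cycV].
Qed.

End PositiveGenerators.

Lemma mul4n_le_fact n : 4 < n -> 4 * n <= n`!.
Proof. by case: n => // m m_ge; rewrite factS mulnC leq_mul //; have := fact_geq m; lia. Qed.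

Lemma leq_sum_In (T : Type) (r : list T) (F : T -> nat) c :
  (forall a, In a r -> F a <= c) -> \sum_(a <- r) F a <= size r * c.
Proof.
elim: r => [|a r IH] F_le; first by rewrite big_nil.
rewrite big_cons mulSn leq_add ?F_le //=; first by left.
by apply: IH => b rb; apply: F_le; right.
Qed.

Section Embedding.
Variables (G : Type) (mul : G -> G -> G) (inv : G -> G) (e : G) (S : list G) (n : nat).
Hypotheses (grpG : is_group mul inv e) (S_sym : forall a, In a S -> In (inv a) S)
  (S_gen : forall x, exists k, has_word mul e S x k) (n_ge5 : 5 <= n).
Local Notation sigma := (sigma_cyc n).
Local Notation mulP := (pmul mul (fun p q : 'S_n => (p * q)%g)).
Local Notation invP := (pinv inv (fun p : 'S_n => p^-1%g)).
Local Notation eP := ((e, 1%g) : G * 'S_n).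
Local Notation SP := (split_gen e 1%g S (S_pos n)).
Local Notation len := (wlen mul e S).
Local Notation lenP := (wlen mulP eP SP).
Local Notation lenS := (wlen (fun p q : 'S_n => (p * q)%g) 1%g (S_pos n)).
Local Notation conjP a x := (mulP (mulP (invP a) x) a).

Let mulA := grp_assoc grpG.
Let mul1x := grp_mul1 grpG.
Let mulx1 := is_group_mulx1 grpG.

Lemma wlen_pair x q : lenP (x, q) = len x + lenS q.
Proof.
apply: wlen_split_gen => //; first exact: mul1g.
by have [k _ wq] := has_word_S_pos_le n_ge5 q; exists k.
Qed.

Lemma wlen_embed g : lenP (g, sigma) = len g + 2.
Proof. by rewrite wlen_pair wlen_sigma_cyc. Qed.

Lemma embed_neq1 g : (g, sigma) <> eP.
Proof. by case=> _ sigma1; have := wlen_sigma_cyc n_ge5; rewrite sigma1 wlen_one. Qed.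

Lemma wdist_embed g h : wdist mulP invP eP SP (g, sigma) (h, sigma) = wdist mul inv e S g h.
Proof. by rewrite /wdist /pmul /pinv /= mulVg wlen_pair wlen_one addn0. Qed.

Lemma wdist_embed_mul g h :
  wdist mulP invP eP SP (mul g h, sigma) (mulP (g, sigma) (h, sigma)) = 2.
Proof. by rewrite /wdist /pmul /pinv /= (grp_mulV grpG) mulKg wlen_embed wlen_one. Qed.

Lemma sum_wlen_conj_S_le g : \sum_(a <- S) lenP (conjP (a, 1%g) (g, sigma)) <= size S * (len g + 4).
Proof.
apply: leq_sum_In => a Sa.
have -> : conjP (a, 1%g) (g, sigma) = (mul (mul (inv a) g) a, sigma).
  by rewrite /pmul /pinv /= invg1 mul1g mulg1.
rewrite wlen_embed.
have len_a : len a <= 1 := wlen_letter_le mulx1 Sa.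
have len_inv_a : len (inv a) <= 1 := wlen_letter_le mulx1 (S_sym Sa).
have len_mul_le := wlen_mul_le mulA mul1x S_gen.
have := leq_trans (len_mul_le _ _) (leq_add (len_mul_le (inv a) g) (leqnn (len a))).
lia.
Qed.

Lemma sum_wlen_conj_S_pos_le g :
  \sum_(p <- S_pos n) lenP (conjP (e, p) (g, sigma)) <= size (S_pos n) * (len g + 1) + 2 * n.
Proof.
have term_le p : lenP (conjP (e, p) (g, sigma)) <=
    (len g + 1) + ((sigma ^ p == sigma) + (sigma ^ p == sigma^-1))%g.
  have -> : conjP (e, p) (g, sigma) = (g, sigma ^ p)%g.
    by rewrite /pmul /pinv /= (is_group_inv1 grpG) mul1x mulx1 -mulgA.
  rewrite wlen_pair.
  have [k k_le wk] := has_word_S_pos_le n_ge5 (sigma ^ p)%g.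
  by rewrite -addnA leq_add2l (leq_trans (wlen_min wk)).
apply: leq_trans; first by apply: leq_sum => p _; exact: term_le.
rewrite big_split leq_add ?leq_sum_In // big_split mul2n -addnn.
by rewrite leq_add ?sum_S_pos_conjg_eq_le.
Qed.

Lemma kappa_embed_gt0 g : size S + 2 <= n -> (0 < kappa mulP invP eP SP (g, sigma))%R.
Proof.
move=> n_large; apply: kappa_gt0; first by rewrite wlen_embed addn2.
rewrite big_split_gen size_split_gen wlen_embed.
apply: leq_ltn_trans; first exact: leq_add (sum_wlen_conj_S_le g) (sum_wlen_conj_S_pos_le g).
have := mul4n_le_fact n_ge5; have := size_S_pos n.
nia.
Qed.

End Embedding.

Theorem mainTheorem10 (G : Type) (mul : G -> G -> G) (inv : G -> G) (e : G)
  (S : list G) :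
  is_group mul inv e -> gen_set mul inv e S ->
  exists N : nat, forall n : nat, (3 <= n)%N -> (N <= n)%N ->
    let mulP := pmul mul (fun x y : 'S_n => (x * y)%g) in
    let invP := pinv inv (fun x : 'S_n => x^-1%g) in
    let oneP := (e, 1%g) : G * 'S_n in
    let SP := split_gen e 1%g S (S_pos n) in
    exists i : G -> G * 'S_n,
      (forall g h : G, wdist mulP invP oneP SP (i g) (i h) = wdist mul inv e S g h) /\
      (forall g : G, i g <> oneP /\ (0 < kappa mulP invP oneP SP (i g))%R) /\
      (forall g h : G, (wdist mulP invP oneP SP (i (mul g h)) (mulP (i g) (i h)) <= 2)%N).
Proof.
move=> grpG [_ [S_sym [_ S_gen]]].
exists (size S + 5) => n _ n_large; cbv zeta.
have n_ge5 : 5 <= n by lia.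
exists (fun g => (g, sigma_cyc n)); split; [|split].
- exact: (wdist_embed grpG S_gen n_ge5).
- move=> g; split; first exact: embed_neq1.
  by apply: (kappa_embed_gt0 grpG S_sym S_gen n_ge5); lia.
- by move=> g h; rewrite (wdist_embed_mul grpG S_gen n_ge5).
Qed.
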